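(* Let $p$ be a prime, let $n\in\mathbb{N}$ and set $q=p^n$. The number of solutions $(a_2,a_3,a_4,b_2,b_3,b_4)\in(\mathbb{Z}/q\mathbb{Z})^6$ to the system \[ a_2b_3-a_3b_2 = a_2b_4-a_4b_2 = a_3b_4-a_4b_3 = 0 \] which additionally satisfy $a_2b_3=a_3b_2=0$ is $O(n^2q^{7/2})$, with an absolute implied constant. *)

From mathcomp Require Import all_boot all_algebra.
Set Implicit Arguments. Unset Strict Implicit. Unset Printing Implicit Defensive.
Import GRing.Theory.

(* Six-tuples (a2,a3,a4,b2,b3,b4) over Z/qZ; 'Z_q is Z/qZ for q >= 2. *)
Definition six (q : nat) : finType := ('Z_q * 'Z_q * 'Z_q * 'Z_q * 'Z_q * 'Z_q)%type.

Definition good_sol (q : nat) (x : six q) : bool :=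
  let: (a2, a3, a4, b2, b3, b4) := x in
  let z : 'Z_q := 0%R in
  [&& (a2 * b3 - a3 * b2 == z)%R, (a2 * b4 - a4 * b2 == z)%R,
      (a3 * b4 - a4 * b3 == z)%R, (a2 * b3 == z)%R & (a3 * b2 == z)%R].

Definition num_good (q : nat) : nat := #|[pred x : six q | good_sol x]|.

(* Fix (a2, a3, b2, b3) with a2 b3 = a3 b2 = 0; the first equation then holds and the
   other two say a2 b4 = a4 b2 and a3 b4 = a4 b3.  In Z/q the pairs (x, y) with
   a y = x b number at most q gcd(a, q) and at most q gcd(b, q), so the fibre over
   (a2, a3, b2, b3) has at most q p^((v a2 + v b2 + v a3 + v b3)/4) points (geometric
   mean of four bounds), v being the p-adic valuation.  Hence the count is at most q W^2,
   where W sums p^((v x + v y)/4) over x y = 0.  Such pairs have v x + v y >= n, and at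
   most p^(n-j) elements have valuation j, so summing over y is a geometric series of
   ratio p^(-3/4) <= 2/3; this gives W <= 3 (n+1) q^(5/4), and the count is at most
   9 (n+1)^2 q^(7/2). *)

From mathcomp Require Import all_boot all_order all_algebra.
From mathcomp Require Import ring lra zify Rstruct.
Set Implicit Arguments. Unset Strict Implicit. Unset Printing Implicit Defensive.
Import Order.TTheory GRing.Theory Num.Theory.

Lemma card_ord_dvdn (M d : nat) :
  d %| M -> #|[pred z : 'I_M | d %| z]| <= M %/ d.
Proof.
case: d => [|d dM].
  rewrite dvd0n => /eqP M0; apply: leq_trans (max_card _) _.
  by rewrite card_ord M0.
rewrite cardE -(size_map (fun z : 'I_M => z %/ d.+1)) -(size_iota 0 (M %/ d.+1)).
apply: uniq_leq_size.
  rewrite map_inj_in_uniq ?enum_uniq // => z1 z2.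
  rewrite !mem_enum !inE => d_z1 d_z2 eq_z.
  by apply: ord_inj; rewrite -(divnK d_z1) -(divnK d_z2) eq_z.
move=> _ /mapP [z _ ->].
by rewrite mem_iota add0n ltn_divLR // divnK ?ltn_ord.
Qed.

Section ResidueRing.
Variable k : nat.
Local Notation M := k.+2.
Local Notation T := 'I_M.

Lemma mulr_eq0_dvdn (x y : T) : (x * y == 0)%R = (M %| x * y).
Proof. by rewrite -val_eqE. Qed.

Definition zgcd (x : T) := gcdn x M.

Lemma zgcd_dvdn (x : T) : zgcd x %| M.
Proof. exact: dvdn_gcdr. Qed.

Lemma zgcd_gt0 (x : T) : 0 < zgcd x.
Proof. by rewrite gcdn_gt0 orbT. Qed.

Lemma card_annihilator (a : T) : #|[pred z : T | a * z == 0]%R| <= zgcd a.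
Proof.
have d_dvd : M %/ zgcd a %| M by rewrite dvdn_divLR ?zgcd_gt0 ?dvdn_mulr ?zgcd_dvdn.
have -> : zgcd a = M %/ (M %/ zgcd a) by rewrite divnA ?zgcd_dvdn // mulKn.
apply: leq_trans (card_ord_dvdn d_dvd); apply: subset_leq_card; apply/subsetP => z.
rewrite !inE mulr_eq0_dvdn => M_az.
have : M %| zgcd a * z by rewrite muln_gcdl dvdn_gcd M_az dvdn_mulr.
by rewrite -{1}(divnK (zgcd_dvdn a)) [zgcd a * _]mulnC dvdn_pmul2r ?zgcd_gt0.
Qed.

Lemma card_mul_eq (a c : T) : #|[pred y : T | a * y == c]%R| <= zgcd a.
Proof.
have [y0 /eqP a_y0 | no_sol] := pickP [pred y : T | a * y == c]%R; last first.
  by rewrite (eq_card0 no_sol).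
apply: leq_trans (card_annihilator a).
rewrite -(card_image (addIr (- y0)%R) [pred y : T | a * y == c]%R).
apply: subset_leq_card.
apply/subsetP => _ /imageP [y /eqP a_y ->].
by rewrite inE mulrDr mulrN a_y a_y0 subrr.
Qed.

Lemma sum_cross_eql (a b : T) (P : T -> T -> bool) :
  (forall x y, P x y -> a * y = x * b)%R -> \sum_x \sum_y P x y <= M * zgcd a.
Proof.
move=> Pab; apply: (@leq_trans (\sum_(x : T) zgcd a)); last first.
  by rewrite sum_nat_const card_ord.
apply: leq_sum => x _.
apply: leq_trans (card_mul_eq a (x * b)%R).
rewrite -sum1_card [leqRHS]big_mkcond /=; apply: leq_sum => y _.
by case Pxy: (P x y); rewrite // inE (Pab _ _ Pxy) eqxx.
Qed.

Lemma sum_cross_eqr (a b : T) (P : T -> T -> bool) :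
  (forall x y, P x y -> a * y = x * b)%R -> \sum_x \sum_y P x y <= M * zgcd b.
Proof.
move=> Pab; rewrite exchange_big; apply: sum_cross_eql => y x /Pab a_y.
by rewrite mulrC -a_y mulrC.
Qed.

End ResidueRing.

Section PrimePowerModulus.
Variables (p n k : nat).
Hypothesis p_prime : prime p.
Hypothesis M_def : k.+2 = p ^ n.
Local Notation M := k.+2.
Local Notation T := 'I_M.

(* The p-adic valuation of x in Z/p^n, with pval 0 = n. *)
Definition pval (x : T) := logn p (zgcd x).

Lemma zgcd_expn (x : T) : zgcd x = p ^ pval x.
Proof.
have : zgcd x %| p ^ n by rewrite -M_def zgcd_dvdn.
by rewrite /pval; case/(dvdn_pfactor _ _ p_prime) => e _ ->; rewrite pfactorK.
Qed.

Lemma pval_le (x : T) : pval x <= n.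
Proof.
by rewrite -(dvdn_Pexp2l _ _ (prime_gt1 p_prime)) -zgcd_expn -M_def zgcd_dvdn.
Qed.

Lemma mul_eq0_pvalD (x y : T) : (x * y == 0)%R -> n <= pval x + pval y.
Proof.
rewrite mulr_eq0_dvdn => M_xy.
have : M %| zgcd x * zgcd y.
  rewrite muln_gcdl dvdn_gcd (dvdn_mulr _ (dvdnn M)) andbT.
  by rewrite muln_gcdr dvdn_gcd M_xy dvdn_mull.
by rewrite !zgcd_expn -expnD M_def dvdn_Pexp2l // prime_gt1.
Qed.

Lemma card_pval_eq (j : nat) : j <= n -> #|[pred x : T | pval x == j]| <= p ^ (n - j).
Proof.
move=> le_jn; rewrite expnB ?prime_gt0 // -M_def.
apply: leq_trans (card_ord_dvdn _); last by rewrite M_def dvdn_exp2l.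
apply: subset_leq_card; apply/subsetP => x; rewrite !inE => /eqP <-.
by rewrite -zgcd_expn dvdn_gcdl.
Qed.

End PrimePowerModulus.

Local Open Scope ring_scope.

Lemma geometric_sum_le (R : realFieldType) (r : R) (N : nat) :
  0 <= r < 1 -> \sum_(i < N) r ^+ i <= (1 - r)^-1.
Proof.
case/andP => r_ge0 r_lt1.
have S_ge0 : 0 <= \sum_(i < N) r ^+ i by rewrite sumr_ge0 // => i _; rewrite exprn_ge0.
have rN_ge0 : 0 <= r ^+ N by rewrite exprn_ge0.
have := subrX1 r N; set S := \sum_(i < N) _ => geomS.
rewrite -[X in _ <= X]mulr1 ler_pdivlMl ?subr_gt0 //; nra.
Qed.

Section Weights.
Variables (R : realFieldType) (p n k : nat).
Hypothesis p_prime : prime p.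
Hypothesis M_def : k.+2 = (p ^ n)%N.
Variable t : R.
Hypothesis t_ge0 : 0 <= t.
Hypothesis t4 : t ^+ 4 = p%:R.
Local Notation T := 'I_k.+2.
Local Notation pval := (pval p).

Lemma root_ratio_le : 3 * t <= 2 * p%:R.
Proof.
have t3 : 3 <= 2 * t ^+ 3.
  rewrite -(ler_pXn2r (_ : 0 < 4)%N) ?nnegrE ?mulr_ge0 ?exprn_ge0 //.
  rewrite exprMn -exprM mulnC exprM t4 -!natrX -natrM ler_nat.
  by have := prime_gt1 p_prime; nia.
by rewrite -t4 exprS; nra.
Qed.

Lemma sum_pval (F : nat -> R) : (forall j, 0 <= F j) ->
  \sum_(x : T) F (pval x) <= \sum_(j < n.+1) (p ^ (n - j))%:R * F j.
Proof.
move=> F_ge0.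
rewrite (partition_big (fun x : T => inord (pval x) : 'I_n.+1) xpredT) //.
apply: ler_sum => j _.
have pvalE (x : T) : (inord (pval x) == j :> 'I_n.+1) = (pval x == j).
  by rewrite -val_eqE /= inordK // ltnS (pval_le p_prime M_def).
rewrite (eq_bigl (fun x : T => pval x == j)) => [|x]; last exact: pvalE.
rewrite (eq_bigr (fun=> F j)) => [|x /eqP -> //].
rewrite sumr_const -[F j *+ _]mulr_natl; apply: ler_wpM2r => //.
by rewrite ler_nat (card_pval_eq p_prime M_def (leq_ord j)).
Qed.

Lemma sum_tail_le (m : nat) : (m <= n)%N ->
  \sum_(m <= j < n.+1) (p ^ (n - j))%:R * t ^+ j <= 3 * (p ^ (n - m))%:R * t ^+ m.
Proof.
move=> le_mn; have p_gt0 : 0 < p%:R :> R by rewrite ltr0n prime_gt0.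
set r := t / p%:R.
have termE j : (m <= j < n.+1)%N ->
    (p ^ (n - j))%:R * t ^+ j = (p ^ (n - m))%:R * t ^+ m * r ^+ (j - m).
  rewrite ltnS => /andP [le_mj le_jn].
  have -> : (n - m = (n - j) + (j - m))%N by lia.
  have -> : t ^+ j = t ^+ m * t ^+ (j - m) by rewrite -exprD subnKC.
  rewrite expnD natrM expr_div_n !natrX; field.
  by rewrite expf_neq0 // gt_eqF.
rewrite big_nat_cond; under eq_bigr => j /andP [range _] do rewrite termE //.
rewrite -big_nat_cond -mulr_sumr (big_addn 0 n.+1 m) big_mkord.
under eq_bigr => i _ do rewrite addnK.
have r_ge0 : 0 <= r by rewrite divr_ge0 // ltW.
have r_le : 3 * r <= 2 by rewrite /r mulrA ler_pdivrMr // root_ratio_le.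
have geom_le3 : \sum_(i < n.+1 - m) r ^+ i <= 3.
  apply: (le_trans (geometric_sum_le _ _)); first by apply/andP; split; lra.
  by rewrite -div1r ler_pdivrMr; lra.
have : 0 <= (p ^ (n - m))%:R * t ^+ m by rewrite mulr_ge0 ?exprn_ge0.
nra.
Qed.

Lemma sum_annihilator_weight (x : T) :
  \sum_(y | (x * y == 0)%R) t ^+ pval y <= 3 * (p ^ pval x)%:R * t ^+ (n - pval x).
Proof.
set m := (n - pval x)%N.
pose F j := if (m <= j)%N then t ^+ j else 0.
have F_ge0 j : 0 <= F j by rewrite /F; case: ifP => // _; rewrite exprn_ge0.
apply: (@le_trans _ _ (\sum_y F (pval y))).
  rewrite big_mkcond; apply: ler_sum => y _; rewrite /F.
  case: ifP => [/mul_eq0_pvalD xy0 | _]; last by case: ifP => // _; rewrite exprn_ge0.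
  by rewrite ifT // leq_subLR xy0.
apply: (le_trans (sum_pval F_ge0)).
have -> : \sum_(j < n.+1) (p ^ (n - j))%:R * F j =
          \sum_(m <= j < n.+1) (p ^ (n - j))%:R * t ^+ j.
  rewrite big_geq_mkord [RHS]big_mkcond; apply: eq_bigr => j _ /=.
  by rewrite /F; case: ifP; rewrite ?mulr0.
apply: le_trans (sum_tail_le (leq_subr _ _)) _.
by rewrite subKn ?(pval_le p_prime M_def).
Qed.

Lemma sum_zero_product_weight :
  \sum_(x : T) \sum_(y | (x * y == 0)%R) t ^+ (pval x + pval y)
    <= 3 * n.+1%:R * t ^+ (5 * n).
Proof.
have tnE (x : T) : t ^+ n = t ^+ pval x * t ^+ (n - pval x).
  by rewrite -exprD subnKC ?(pval_le p_prime M_def).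
have row_le (x : T) : \sum_(y | (x * y == 0)%R) t ^+ (pval x + pval y)
                  <= 3 * t ^+ n * (p ^ pval x)%:R.
  under eq_bigr do rewrite exprD; rewrite -mulr_sumr.
  apply: le_trans (ler_wpM2l (exprn_ge0 _ t_ge0) (sum_annihilator_weight x)) _.
  by rewrite (tnE x); lra.
apply: le_trans (ler_sum _ (fun x _ => row_le x)) _.
rewrite -mulr_sumr.
apply: le_trans (ler_wpM2l _ (sum_pval (fun j => ler0n _ (p ^ j)))) _.
  by rewrite mulr_ge0 ?exprn_ge0.
have -> : \sum_(j < n.+1) (p ^ (n - j))%:R * (p ^ j)%:R = \sum_(j < n.+1) (p ^ n)%:R :> R.
  by apply: eq_bigr => j _; rewrite -natrM -expnD subnK // leq_ord.
rewrite sumr_const card_ord natrX -t4 -exprM -[t ^+ _ *+ _]mulr_natr.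
have -> : t ^+ (5 * n) = t ^+ n * t ^+ (4 * n) by rewrite -exprD; congr (_ ^+ _); lia.
lra.
Qed.

Lemma le_fourth_root_zgcd (X : nat) (a b c d : T) :
  (X <= k.+2 * zgcd a)%N -> (X <= k.+2 * zgcd b)%N ->
  (X <= k.+2 * zgcd c)%N -> (X <= k.+2 * zgcd d)%N ->
  X%:R <= (p ^ n)%:R * t ^+ (pval a + pval b + pval c + pval d).
Proof.
move=> Xa Xb Xc Xd.
have X4 : (X ^ 4 <= k.+2 ^ 4 * p ^ (pval a + pval b + pval c + pval d))%N.
  rewrite !expnD -!(zgcd_expn p_prime M_def).
  have -> : (X ^ 4 = X * X * X * X)%N by rewrite !expnS expn0 muln1 !mulnA.
  apply: (leq_trans (leq_mul (leq_mul (leq_mul Xa Xb) Xc) Xd)).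
  by rewrite !expnS expn0 muln1; nia.
rewrite -(ler_pXn2r (_ : 0 < 4)%N) ?nnegrE ?mulr_ge0 ?exprn_ge0 //.
rewrite -natrX exprMn -exprM mulnC exprM t4 -!natrX -natrM -M_def ler_nat.
exact: X4.
Qed.

End Weights.

Lemma big_six (R : Type) (idx : R) (op : Monoid.com_law idx) (q : nat) (F : six q -> R) :
  \big[op/idx]_x F x =
  \big[op/idx]_a2 \big[op/idx]_a3 \big[op/idx]_b3 \big[op/idx]_b2
    \big[op/idx]_a4 \big[op/idx]_b4 F (a2, a3, a4, b2, b3, b4).
Proof.
transitivity (\big[op/idx]_a2 \big[op/idx]_a3 \big[op/idx]_a4 \big[op/idx]_b2
    \big[op/idx]_b3 \big[op/idx]_b4 F (a2, a3, a4, b2, b3, b4)).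
  by rewrite !pair_bigA; apply: eq_bigr => -[[[[[? ?] ?] ?] ?] ?].
apply: eq_bigr => a2 _; apply: eq_bigr => a3 _.
by rewrite exchange_big; under eq_bigr do rewrite exchange_big; rewrite exchange_big.
Qed.

Section Counting.
Variables (R : realFieldType) (p n : nat).
Hypothesis p_prime : prime p.
Hypothesis n_gt0 : (0 < n)%N.
Variable t : R.
Hypothesis t_ge0 : 0 <= t.
Hypothesis t4 : t ^+ 4 = p%:R.
Local Notation q := (p ^ n)%N.
Local Notation T := 'Z_q.
Local Notation pval := (pval p).

Lemma Zp_trunc_expn : (Zp_trunc q).+2 = q.
Proof. by apply: Zp_cast; rewrite -{1}(expn0 p) ltn_exp2l // prime_gt1. Qed.

Local Notation weight x y := (if (x * y == 0)%R then t ^+ (pval x + pval y) else 0).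

Lemma sum_fiber_le (a2 a3 b3 b2 : T) :
  (\sum_a4 \sum_b4 good_sol (a2, a3, a4, b2, b3, b4))%:R <=
  q%:R * (weight a2 b3 * weight a3 b2).
Proof.
case: ifP => [a2b3_0 | a2b3_n0]; last first.
  rewrite big1 ?mul0r ?mulr0 // => a4 _; rewrite big1 // => b4 _.
  by rewrite /good_sol a2b3_n0 /= !andbF.
case: ifP => [a3b2_0 | a3b2_n0]; last first.
  rewrite big1 ?mul0r ?mulr0 // => a4 _; rewrite big1 // => b4 _.
  by rewrite /good_sol a3b2_n0 /= !andbF.
pose P a4 b4 := good_sol (a2, a3, a4, b2, b3, b4).
have eq2 a4 b4 : P a4 b4 -> (a2 * b4 = a4 * b2)%R.
  by case/and5P => _ /eqP /subr0_eq.
have eq3 a4 b4 : P a4 b4 -> (a3 * b4 = a4 * b3)%R.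
  by case/and5P => _ _ /eqP /subr0_eq.
rewrite -exprD (_ : (_ + _ + (_ + _) = pval a2 + pval b2 + pval a3 + pval b3)%N); last by lia.
by apply: (le_fourth_root_zgcd p_prime Zp_trunc_expn t_ge0 t4);
  [apply: (sum_cross_eql eq2) | apply: (sum_cross_eqr eq2)
  |apply: (sum_cross_eql eq3) | apply: (sum_cross_eqr eq3)].
Qed.

Lemma num_good_le :
  (num_good q)%:R <=
    q%:R * (\sum_(x : T) \sum_(y | (x * y == 0)%R) t ^+ (pval x + pval y)) ^+ 2.
Proof.
under [X in _ <= _ * X ^+ 2]eq_bigr do rewrite big_mkcond.
rewrite /num_good -sum1_card big_mkcond big_six expr2 big_distrlr.
rewrite natr_sum mulr_sumr; apply: ler_sum => a2 _.
rewrite natr_sum mulr_sumr; apply: ler_sum => a3 _.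
rewrite big_distrlr natr_sum mulr_sumr; apply: ler_sum => b3 _.
rewrite natr_sum mulr_sumr; apply: ler_sum => b2 _.
exact: sum_fiber_le.
Qed.

End Counting.

Lemma num_good_le_sqrt (R : rcfType) (p n : nat) : prime p -> (0 < n)%N ->
  (num_good (p ^ n))%:R <= 36 * (n ^ 2)%:R * (p ^ n)%:R ^+ 3 * Num.sqrt (p ^ n)%:R :> R.
Proof.
move=> p_prime n_gt0.
set t := Num.sqrt (Num.sqrt (p%:R : R)).
have t_ge0 : 0 <= t by exact: sqrtr_ge0.
have t4 : t ^+ 4 = p%:R by rewrite (exprM t 2 2) !sqr_sqrtr ?sqrtr_ge0.
have count_le := num_good_le p_prime n_gt0 t_ge0 t4.
have W_le := sum_zero_product_weight p_prime (Zp_trunc_expn p_prime n_gt0) t_ge0 t4.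
set W := \sum_x _ in count_le W_le.
have W_ge0 : 0 <= W by apply: sumr_ge0 => x _; apply: sumr_ge0 => y _; exact: exprn_ge0.
apply: (le_trans count_le).
set c := t ^+ n; have c_ge0 : 0 <= c by exact: exprn_ge0.
have qE : (p ^ n)%:R = (c ^+ 2) ^+ 2 :> R by rewrite natrX -t4 -!exprM mulnC.
rewrite (mulnC 5) exprM -/c -[n.+1%:R]natr1 in W_le.
have W2_le : W ^+ 2 <= (3 * (n%:R + 1) * c ^+ 5) ^+ 2.
  by rewrite !expr2; apply: ler_pM.
have n_ge1 : 1 <= n%:R :> R by rewrite ler1n.
rewrite qE sqrtr_sqr ger0_norm ?exprn_ge0 // natrX.
apply: le_trans (ler_wpM2l (exprn_ge0 _ (exprn_ge0 _ c_ge0)) W2_le) _.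
rewrite [leLHS](_ : _ = (3 * (n%:R + 1)) ^+ 2 * c ^+ 14); last by ring.
rewrite [leRHS](_ : _ = 36 * n%:R ^+ 2 * c ^+ 14); last by ring.
by apply: ler_wpM2r; [exact: exprn_ge0 | nra].
Qed.

Local Close Scope ring_scope.
From Stdlib Require Import Reals.

Theorem lemma5p2 :
  exists C : R, forall p n : nat, prime p -> (0 < n)%N ->
    (INR (num_good (p ^ n)) <=
       C * INR (n ^ 2) * INR (p ^ n) ^ 3 * sqrt (INR (p ^ n)))%R.
Proof.
exists (INR 36) => p n p_prime n_gt0.
have powE (a b : nat) : Nat.pow a b = expn a b.
  by elim: b => // b IH; rewrite expnS -IH.
rewrite !INRE !RpowE RsqrtE !RmultE !powE; apply/RleP.
exact: num_good_le_sqrt.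
Qed.
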